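(* Let $q_1,q_2,q_3,q_4$ be indeterminates of weights $1,2,3,4$ and $S(y)=y^4+q_1y^3+q_2y^2+q_3y+q_4$. Then the differential equation $(h'(x))^2=S(h(x))$ has a unique solution of the form $h=f'/f$ with $f(x)=x+O(x^2)$, i.e. $h(x)=\frac1x+c_1+c_2x+\dots\in\mathbb{Q}[q_1,q_2,q_3,q_4][[x]][x^{-1}]$. This $h$ determines uniquely the power series $Q(x)=x/f(x)=1+a_1x+a_2x^2+\dots\in\mathbb{Q}[q_1,\dots,q_4][[x]]$, and each $a_n$ is a weighted homogeneous polynomial of weight $n$ in $q_1,\dots,q_4$. *)

From HB Require Import structures.
From mathcomp Require Import all_boot all_order all_algebra.
From mathcomp Require Export mpoly.
Set Implicit Arguments. Unset Strict Implicit. Unset Printing Implicit Defensive.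
Import Order.TTheory GRing.Theory Num.Theory.
Local Open Scope ring_scope.

(* Coefficient ring Q[q1,q2,q3,q4]; q_k is 'X_(k-1), i.e. variable i : 'I_4
   stands for q_(i+1) and has weight i+1. *)
Definition Rq := {mpoly rat[4]}.
Definition q (i : 'I_4) : Rq := 'X_i.
Definition q1 : Rq := q (@Ordinal 4 0 isT).
Definition q2 : Rq := q (@Ordinal 4 1 isT).
Definition q3 : Rq := q (@Ordinal 4 2 isT).
Definition q4 : Rq := q (@Ordinal 4 3 isT).

(* Formal power series over a ring R, as coefficient sequences:
   s n is the coefficient of x^n. *)
Definition fps (R : Type) := nat -> R.

Definition fps_mul (R : nzRingType) (f g : fps R) : fps R :=
  fun n => \sum_(i < n.+1) f i * g (n - i)%N.
Definition fps_add (R : nzRingType) (f g : fps R) : fps R := fun n => f n + g n.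
Definition fps_scale (R : nzRingType) (c : R) (f : fps R) : fps R := fun n => c * f n.
Definition fps_deriv (R : nzRingType) (f : fps R) : fps R :=
  fun n => f n.+1 *+ n.+1.
Definition fps_X (R : nzRingType) : fps R := fun n => if n == 1%N then 1 else 0.
Definition fps_pow (R : nzRingType) (f : fps R) (k : nat) : fps R :=
  iter k (fps_mul f) (fun n => if n == 0%N then 1 else 0).

(* The ODE (h')^2 = S(h), S(y) = y^4 + q1 y^3 + q2 y^2 + q3 y + q4, for
   h = f'/f, with denominators cleared: multiplying by f^4 (f is a nonzero
   element of the integral domain Q[q][[x]][x^-1]) it is equivalent to
   (f'' f - f'^2)^2 = f'^4 + q1 f'^3 f + q2 f'^2 f^2 + q3 f' f^3 + q4 f^4. *)
Definition ode_for_logderiv (f : fps Rq) : Prop :=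
  let f1 := fps_deriv f in
  let f2 := fps_deriv f1 in
  let W := fps_add (fps_mul f2 f) (fps_scale (-1) (fps_mul f1 f1)) in
  let P a b := fps_mul (fps_pow f1 a) (fps_pow f b) in
  forall n,
    fps_pow W 2%N n =
    P 4%N 0%N n + q1 * P 3%N 1%N n + q2 * P 2%N 2%N n
    + q3 * P 1%N 3%N n + q4 * P 0%N 4%N n.

Definition normalized (f : fps Rq) : Prop := f 0%N = 0 /\ f 1%N = 1.

Definition wt_homog (d : nat) (p : Rq) : Prop :=
  forall m : 'X_{1..4}, m \in msupp p -> (\sum_(i < 4) i.+1 * m i)%N = d.

From HB Require Import structures.
From mathcomp Require Import all_boot all_order all_algebra.
From mathcomp Require Import mpoly.
From mathcomp Require Import ring zify.
From Stdlib Require Import FunctionalExtensionality.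
Set Implicit Arguments. Unset Strict Implicit. Unset Printing Implicit Defensive.
Import Order.TTheory GRing.Theory Num.Theory.
Local Open Scope ring_scope.

(* For [f = x + O(x^2)], perturbing [f] by [a x^(m+2)] changes, modulo [x^(m+2)],
   [f'' f - f'^2] (which starts with [-1]) by [(m+2)(m-1) a x^(m+1)], [f'^4] by
   [4(m+2) a x^(m+1)], and the other terms not at all.  So the coefficient
   of [x^(m+1)] of the equation is [-2(m+1)(m+2) f_(m+2)] plus an expression in
   [f_0, ..., f_(m+1)], and the [f_n] are determined recursively.  The equation is
   homogeneous of weight 0 when [x] has weight [-1], hence [f_n] has weight [n-1].
   Finally [Q f = x] is solved by [Q_k = [k = 0] - sum_(i<k) Q_i f_(k+1-i)],
   which gives [Q_n] weight [n]. *)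

Definition wt (m : 'X_{1..4}) : nat := (\sum_(i < 4) i.+1 * m i)%N.

(* Weighted homogeneity with an integer weight: a nonzero polynomial has no
   monomial of negative weight, so [wt_homogz d p] with [d < 0] means [p = 0]. *)
Definition wt_homogz (d : int) (p : Rq) : Prop :=
  forall m, m \in msupp p -> (wt m)%:Z = d.

Lemma wt_homogzE (n : nat) (p : Rq) : wt_homogz n p <-> wt_homog n p.
Proof. by split=> H m /H; [move/eqP; rewrite eqz_nat => /eqP | rewrite /wt => ->]. Qed.

Lemma wt_homogzP d p : wt_homogz d p <-> (forall m, (wt m)%:Z != d -> p@_m = 0).
Proof.
split=> H m.
  by apply: contraNeq => Hm; apply/eqP/H; rewrite mcoeff_msupp.
by rewrite mcoeff_msupp; apply: contraNeq => /H ->.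
Qed.

Lemma wtD m1 m2 : wt (m1 + m2)%MM = (wt m1 + wt m2)%N.
Proof. by rewrite /wt -big_split; apply: eq_bigr => i _; rewrite mnmDE mulnDr. Qed.

Lemma wt_homogz0 d : wt_homogz d 0.
Proof. by apply/wt_homogzP => m _; rewrite mcoeff0. Qed.

Lemma wt_homogz1 : wt_homogz 0 1.
Proof.
apply/wt_homogzP => m; rewrite mcoeff1; case: (m =P 0%MM) => // ->.
by rewrite /wt big1 ?eqxx // => i _; rewrite mnm0E muln0.
Qed.

Lemma wt_homogz_q (i : 'I_4) : wt_homogz i.+1 (q i).
Proof.
move=> m; rewrite /q msuppX mem_seq1 => /eqP ->; congr Posz.
rewrite /wt (bigD1 i) //= mnm1E eqxx muln1 big1 ?addn0 // => j /negbTE Hj.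
by rewrite mnm1E eq_sym Hj muln0.
Qed.

Lemma wt_homogzD d p r : wt_homogz d p -> wt_homogz d r -> wt_homogz d (p + r).
Proof.
move=> /wt_homogzP Hp /wt_homogzP Hr; apply/wt_homogzP => m Hm.
by rewrite mcoeffD Hp ?Hr ?addr0.
Qed.

Lemma wt_homogzN d p : wt_homogz d p -> wt_homogz d (- p).
Proof. by move=> /wt_homogzP Hp; apply/wt_homogzP => m Hm; rewrite mcoeffN Hp ?oppr0. Qed.

Lemma wt_homogzB d p r : wt_homogz d p -> wt_homogz d r -> wt_homogz d (p - r).
Proof. by move=> Hp Hr; apply/wt_homogzD/wt_homogzN. Qed.

Lemma wt_homogzMn d p k : wt_homogz d p -> wt_homogz d (p *+ k).
Proof. by move=> /wt_homogzP Hp; apply/wt_homogzP => m Hm; rewrite mcoeffMn Hp ?mul0rn. Qed.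

Lemma wt_homogzZ d (c : rat) p : wt_homogz d p -> wt_homogz d (c *: p).
Proof. by move=> /wt_homogzP Hp; apply/wt_homogzP => m Hm; rewrite mcoeffZ Hp ?mulr0. Qed.

Lemma wt_homogzM d1 d2 p r :
  wt_homogz d1 p -> wt_homogz d2 r -> wt_homogz (d1 + d2) (p * r).
Proof.
move=> /wt_homogzP Hp /wt_homogzP Hr; apply/wt_homogzP => m Hm; rewrite mcoeffM.
apply: big1 => k /eqP Hk.
have [E1|/Hp->] := eqVneq (wt k.1)%:Z d1; last by rewrite mul0r.
have [E2|/Hr->] := eqVneq (wt k.2)%:Z d2; last by rewrite mulr0.
by case/eqP: Hm; rewrite Hk wtD PoszD E1 E2.
Qed.

Lemma wt_homogz_sum d (I : finType) (P : pred I) (F : I -> Rq) :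
  (forall i, P i -> wt_homogz d (F i)) -> wt_homogz d (\sum_(i | P i) F i).
Proof.
by move=> H; apply: (big_ind (wt_homogz d)) => //; [exact: wt_homogz0|exact: wt_homogzD].
Qed.

Section PolyApprox.
Variable R : nzRingType.
Implicit Types (P Q : {poly R}) (a b : fps R).

Definition fps_agree (n : nat) P a := forall i, (i <= n)%N -> P`_i = a i.

Definition fps_trunc (N : nat) a : {poly R} := \poly_(i < N) a i.

Lemma fps_agreeW m n P a : (m <= n)%N -> fps_agree n P a -> fps_agree m P a.
Proof. by move=> Hmn H i Hi; apply: H; lia. Qed.

Lemma fps_agree_trunc n N a : (n < N)%N -> fps_agree n (fps_trunc N a) a.
Proof. by move=> HN i Hi; rewrite coef_poly; case: ifP => //; lia. Qed.

Lemma fps_agreeD n P Q a b :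
  fps_agree n P a -> fps_agree n Q b -> fps_agree n (P + Q) (fps_add a b).
Proof. by move=> HP HQ i Hi; rewrite coefD HP ?HQ. Qed.

Lemma fps_agreeCM n c P a : fps_agree n P a -> fps_agree n (c%:P * P) (fps_scale c a).
Proof. by move=> HP i Hi; rewrite coefCM HP. Qed.

Lemma fps_agreeM n P Q a b :
  fps_agree n P a -> fps_agree n Q b -> fps_agree n (P * Q) (fps_mul a b).
Proof.
move=> HP HQ i Hi; rewrite coefM; apply: eq_bigr => j _.
by rewrite HP ?HQ //; have := ltn_ord j; lia.
Qed.

Lemma fps_agreeX n P a k : fps_agree n P a -> fps_agree n (P ^+ k) (fps_pow a k).
Proof.
move=> HP; elim: k => [|k IH]; first by move=> i Hi; rewrite expr0 coefC.
by rewrite exprS /fps_pow iterS; apply: fps_agreeM.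
Qed.

Lemma fps_agree_deriv n P a : fps_agree n.+1 P a -> fps_agree n P^`() (fps_deriv a).
Proof. by move=> HP i Hi; rewrite coef_deriv HP. Qed.

Lemma fps_trunc_add n k a :
  fps_trunc (n + k) a = fps_trunc n a + 'X^n * fps_trunc k (fun i => a (n + i)%N).
Proof.
apply/polyP => i; rewrite coefD coefXnM !coef_poly.
case: (ltnP i n) => Hin; first by rewrite addr0 ifT //; lia.
by rewrite add0r subnKC // ltn_subLR.
Qed.

Lemma horner0_fps_trunc N a : (0 < N)%N -> (fps_trunc N a).[0] = a 0%N.
Proof. by move=> N0; rewrite horner_coef0 coef_poly N0. Qed.

Lemma horner0_deriv_fps_trunc N a : (1 < N)%N -> (fps_trunc N a)^`().[0] = a 1%N.
Proof. by move=> N1; rewrite horner_coef0 coef_deriv coef_poly N1. Qed.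

Lemma derivXnM n P : ('X^(n.+1) * P)^`() = 'X^n * (P *+ n.+1 + 'X * P^`()).
Proof. by rewrite derivM derivXn /= mulrnAl exprSr -mulrA mulrDr mulrnAr. Qed.

End PolyApprox.

(* [yy] stands for [y'' * y].  Below, [y] is perturbed by a multiple of [x^(m+2)],
   so [y''] only by a multiple of [x^m] but [y'' * y] by a multiple of [x^(m+1)]. *)
Definition ode_resid (R : comNzRingType) (c1 c2 c3 c4 y y1 yy : R) : R :=
  (yy - y1 ^+ 2) ^+ 2 -
  (y1 ^+ 4 + c1 * (y1 ^+ 3 * y) + c2 * (y1 ^+ 2 * y ^+ 2)
   + c3 * (y1 * y ^+ 3) + c4 * y ^+ 4).

Definition resid_poly (F : {poly Rq}) : {poly Rq} :=
  ode_resid q1%:P q2%:P q3%:P q4%:P F F^`() (F^`()^`() * F).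

Lemma ode_for_logderivP f :
  ode_for_logderiv f <-> forall n, (resid_poly (fps_trunc n.+3 f))`_n = 0.
Proof.
have coefE n : (resid_poly (fps_trunc n.+3 f))`_n =
    fps_pow (fps_add (fps_mul (fps_deriv (fps_deriv f)) f)
                     (fps_scale (-1) (fps_mul (fps_deriv f) (fps_deriv f)))) 2%N n
    - (fps_mul (fps_pow (fps_deriv f) 4%N) (fps_pow f 0%N) n
       + q1 * fps_mul (fps_pow (fps_deriv f) 3%N) (fps_pow f 1%N) n
       + q2 * fps_mul (fps_pow (fps_deriv f) 2%N) (fps_pow f 2%N) n
       + q3 * fps_mul (fps_pow (fps_deriv f) 1%N) (fps_pow f 3%N) n
       + q4 * fps_mul (fps_pow (fps_deriv f) 0%N) (fps_pow f 4%N) n).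
  set F := fps_trunc n.+3 f.
  have H0 : fps_agree n.+2 F f by exact: fps_agree_trunc.
  have H1 := fps_agree_deriv H0; have H2 := fps_agree_deriv H1.
  have {}H0 := fps_agreeW (leqW (leqnSn n)) H0; have {}H1 := fps_agreeW (leqnSn n) H1.
  have HP a b := fps_agreeM (fps_agreeX a H1) (fps_agreeX b H0).
  have HW := fps_agreeD (fps_agreeM H2 H0) (fps_agreeCM (-1) (fps_agreeM H1 H1)).
  rewrite -(fps_agreeX 2%N HW) // -(HP 4%N 0%N) // -(HP 3%N 1%N) // -(HP 2%N 2%N) //.
  rewrite -(HP 1%N 3%N) // -(HP 0%N 4%N) // polyCN mulN1r -expr2 !expr0 !expr1.
  by rewrite mulr1 mul1r /resid_poly /ode_resid coefB !coefD !coefCM.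
rewrite /ode_for_logderiv; cbv zeta.
by split=> E n; [rewrite coefE E subrr | apply/eqP; rewrite -subr_eq0 -coefE E].
Qed.

Section FirstOrderPerturbation.
Variable R : comNzRingType.
Variables (c1 c2 c3 c4 : R).

Definition resid_perturbed (y dy y1 dy1 yy dyy ddyy : R) : {poly R} :=
  ode_resid c1%:P c2%:P c3%:P c4%:P (y%:P + 'X * dy%:P) (y1%:P + 'X * dy1%:P)
    (yy%:P + 'X * dyy%:P + 'X^2 * ddyy%:P).

Lemma horner_resid_perturbed y dy y1 dy1 yy dyy ddyy e :
  (resid_perturbed y dy y1 dy1 yy dyy ddyy).[e] =
  ode_resid c1 c2 c3 c4 (y + e * dy) (y1 + e * dy1) (yy + e * dyy + e ^+ 2 * ddyy).
Proof. by rewrite /resid_perturbed /ode_resid !hornerE. Qed.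

Lemma coef0_resid_perturbed y dy y1 dy1 yy dyy ddyy :
  (resid_perturbed y dy y1 dy1 yy dyy ddyy)`_0 = ode_resid c1 c2 c3 c4 y y1 yy.
Proof. by rewrite -horner_coef0 horner_resid_perturbed expr2 !mul0r !addr0. Qed.

(* The [c_i] terms vanish with [y], and the contributions of [dy1] cancel. *)
Lemma coef1_resid_perturbed_origin dy1 dyy ddyy :
  (resid_perturbed 0 0 1 dy1 0 dyy ddyy)`_1 = - (dyy *+ 2).
Proof.
have coef1E (p : {poly R}) : p`_1 = (p^`()).[0] by rewrite horner_coef0 coef_deriv.
rewrite coef1E /resid_perturbed /ode_resid polyC0 mulr0 !add0r expr0n !mulr0 !addr0.
rewrite !exprS !expr0 !(derivD, derivN, derivM, derivC, derivX).
by rewrite !(hornerD, hornerN, hornerM, hornerC, hornerX); ring.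
Qed.

End FirstOrderPerturbation.

Lemma map_resid_perturbed (R S : comNzRingType) (g : {rmorphism R -> S})
    c1 c2 c3 c4 y dy y1 dy1 yy dyy ddyy :
  map_poly g (resid_perturbed c1 c2 c3 c4 y dy y1 dy1 yy dyy ddyy) =
  resid_perturbed (g c1) (g c2) (g c3) (g c4) (g y) (g dy) (g y1) (g dy1)
    (g yy) (g dyy) (g ddyy).
Proof.
by rewrite /resid_perturbed /ode_resid
  !(rmorphB, rmorphD, rmorphM, rmorphXn) /= !(map_polyC, map_polyX, map_polyXn).
Qed.

Lemma horner_coef_resid_perturbed (R : comNzRingType) (c1 c2 c3 c4 : {poly R})
    y dy y1 dy1 yy dyy ddyy i x :
  ((resid_perturbed c1 c2 c3 c4 y dy y1 dy1 yy dyy ddyy)`_i).[x] =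
  (resid_perturbed c1.[x] c2.[x] c3.[x] c4.[x] y.[x] dy.[x] y1.[x] dy1.[x]
     yy.[x] dyy.[x] ddyy.[x])`_i.
Proof. by rewrite -horner_evalE -coef_map map_resid_perturbed. Qed.

Lemma coef_horner_Xn (R : comNzRingType) (p : {poly {poly R}}) m :
  (p.['X^(m.+1)])`_m.+1 = (p`_0)`_m.+1 + (p`_1)`_0.
Proof.
have Ep : p = (p`_0)%:P + 'X * (p`_1)%:P + drop_poly 2 p * 'X^2.
  rewrite -{1}(poly_take_drop 2 p); congr (_ + _); apply/polyP => i.
  by rewrite coef_take_poly coefD coefC coefXM coefC; case: i => [|[|i]] //=;
    rewrite ?addr0 ?add0r.
rewrite {1}Ep !(hornerD, hornerM, hornerC, hornerX, hornerXn) !coefD.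
by rewrite coefXnM ltnn subnn mulrC -mulrA coefXnM ltnn subnn coefXnM ltn0Sn addr0.
Qed.

Definition ode_pivot (m : nat) : nat := (m.+1 * m.+2).*2.

Lemma coef_resid_polyXnMD m (G A : {poly Rq}) : G.[0] = 0 -> G^`().[0] = 1 ->
  (resid_poly (G + 'X^(m.+2) * A))`_m.+1 =
  (resid_poly G)`_m.+1 - (ode_pivot m)%:R * A.[0].
Proof.
move=> G0 dG0.
have [G1 defG] : exists G1, G = 'X * G1.
  have /factor_theorem[G1 ->] : root G 0 by exact/eqP.
  by exists G1; rewrite subr0 mulrC.
have G10 : G1.[0] = 1.
  by rewrite -dG0 defG derivM derivX mul1r !(hornerD, hornerM, hornerX) mul0r addr0.
set B := A *+ m.+2 + 'X * A^`(); set C := B *+ m.+1 + 'X * B^`().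
have dF : (G + 'X^(m.+2) * A)^`() = G^`() + 'X^(m.+1) * B by rewrite derivD derivXnM.
have ddF : (G^`() + 'X^(m.+1) * B)^`() = G^`()^`() + 'X^m * C.
  by rewrite derivD derivXnM.
have C0 : C.[0] = A.[0] *+ m.+2 *+ m.+1.
  by rewrite !(hornerD, hornerMn, hornerM, hornerX) !mul0r !addr0.
have -> : resid_poly (G + 'X^(m.+2) * A) =
    (resid_perturbed q1%:P q2%:P q3%:P q4%:P G ('X * A) G^`() B
       (G^`()^`() * G) (G^`()^`() * 'X * A + C * G1) (C * A)).['X^(m.+1)].
  rewrite horner_resid_perturbed /resid_poly dF ddF.
  by congr ode_resid; rewrite defG !exprS; ring.
rewrite coef_horner_Xn coef0_resid_perturbed -horner_coef0 horner_coef_resid_perturbed.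
clearbody C; rewrite !(hornerD, hornerM, hornerX, hornerC) G0 dG0 G10 C0.
rewrite !(mulr0, mul0r, add0r, mulr1) coef1_resid_perturbed_origin mulr_natl -!mulrnA.
by congr (_ - _ *+ _); rewrite /ode_pivot -muln2; lia.
Qed.

Lemma resid_poly_coef0 (G : {poly Rq}) : G.[0] = 0 -> G^`().[0] = 1 ->
  (resid_poly G)`_0 = 0.
Proof.
move=> G0 dG0; rewrite -horner_coef0 /resid_poly /ode_resid.
by rewrite !(hornerD, hornerN, hornerM, horner_exp, hornerC) G0 dG0; ring.
Qed.

(* [P] is homogeneous of weight [w] when [x] is given weight [-1]. *)
Definition graded (P : {poly Rq}) (w : int) : Prop :=
  forall i : nat, wt_homogz (i%:Z + w) P`_i.

Lemma gradedC c (d : int) : wt_homogz d c -> graded c%:P d.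
Proof. by move=> Hc [|i]; rewrite coefC //= ?add0r //; exact: wt_homogz0. Qed.

Lemma gradedD P Q w : graded P w -> graded Q w -> graded (P + Q) w.
Proof. by move=> HP HQ i; rewrite coefD; apply: wt_homogzD. Qed.

Lemma gradedB P Q w : graded P w -> graded Q w -> graded (P - Q) w.
Proof. by move=> HP HQ i; rewrite coefB; apply: wt_homogzB. Qed.

Lemma gradedM P Q a b : graded P a -> graded Q b -> graded (P * Q) (a + b).
Proof.
move=> HP HQ i; rewrite coefM; apply: wt_homogz_sum => j _.
have -> : i%:Z + (a + b) = (j%:Z + a) + ((i - j)%N%:Z + b) by have := ltn_ord j; lia.
exact: wt_homogzM.
Qed.

Lemma gradedX k P w : graded P w -> graded (P ^+ k) (k%:Z * w).
Proof.
move=> HP; elim: k => [|k IH]; first by rewrite expr0 mul0r -polyC1; exact: gradedC wt_homogz1.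
by rewrite exprS intS mulrDl mul1r; exact: gradedM.
Qed.
Arguments gradedX k {P w}.

Lemma graded_deriv P w : graded P w -> graded P^`() (w + 1).
Proof.
move=> HP i; rewrite coef_deriv; apply: wt_homogzMn.
by have -> : i%:Z + (w + 1) = i.+1%:Z + w by lia.
Qed.

Lemma graded_resid_poly G : graded G (-1) -> graded (resid_poly G) 0.
Proof.
move=> HG; have H1 : graded G^`() 0 := graded_deriv HG.
have H2 : graded G^`()^`() 1 := graded_deriv H1.
have Hq i : graded (q i)%:P i.+1 := gradedC (@wt_homogz_q i).
have HW : graded (G^`()^`() * G - G^`() ^+ 2) 0 := gradedB (gradedM H2 HG) (gradedX 2 H1).
have Hq1 : graded (q1%:P * (G^`() ^+ 3 * G)) 0 := gradedM (Hq _) (gradedM (gradedX 3 H1) HG).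
have Hq2 : graded (q2%:P * (G^`() ^+ 2 * G ^+ 2)) 0 :=
  gradedM (Hq _) (gradedM (gradedX 2 H1) (gradedX 2 HG)).
have Hq3 : graded (q3%:P * (G^`() * G ^+ 3)) 0 := gradedM (Hq _) (gradedM H1 (gradedX 3 HG)).
have Hq4 : graded (q4%:P * G ^+ 4) 0 := gradedM (Hq _) (gradedX 4 HG).
have HW2 : graded ((G^`()^`() * G - G^`() ^+ 2) ^+ 2) 0 := gradedX 2 HW.
have HP4 : graded (G^`() ^+ 4) 0 := gradedX 4 H1.
by apply: gradedB => //; do 4 apply: gradedD => //.
Qed.

Section StrongRecursion.
Variables (T : Type) (x0 : T) (step : nat -> (nat -> T) -> T).
Hypothesis step_ext :
  forall n g h, (forall i, (i < n)%N -> g i = h i) -> step n g = step n h.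

Fixpoint strong_rec_seq (n : nat) : seq T :=
  if n is n'.+1 then rcons (strong_rec_seq n') (step n (nth x0 (strong_rec_seq n')))
  else [:: step 0 (fun _ => x0)].

Definition strong_rec (n : nat) : T := nth x0 (strong_rec_seq n) n.

Lemma size_strong_rec_seq n : size (strong_rec_seq n) = n.+1.
Proof. by elim: n => [|n IH] //=; rewrite size_rcons IH. Qed.

Lemma nth_strong_rec_seq n i : (i <= n)%N -> nth x0 (strong_rec_seq n) i = strong_rec i.
Proof.
elim: n => [|n IH] Hi; first by move: Hi; rewrite leqn0 => /eqP->.
rewrite /= nth_rcons size_strong_rec_seq; case: ltngtP Hi => // [Hi _|-> _].
  exact: IH.
by rewrite /strong_rec /= nth_rcons size_strong_rec_seq ltnn eqxx.
Qed.

Lemma strong_recE n : strong_rec n = step n strong_rec.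
Proof.
rewrite /strong_rec; case: n => [|n] /=; first exact: step_ext.
rewrite nth_rcons size_strong_rec_seq ltnn eqxx; apply: step_ext => i Hi.
exact: nth_strong_rec_seq.
Qed.

Lemma strong_rec_unique g : (forall n, g n = step n g) -> g = strong_rec.
Proof.
move=> Hg; apply: functional_extensionality => n; elim/ltn_ind: n => n IH.
by rewrite Hg strong_recE; apply: step_ext.
Qed.

End StrongRecursion.

Section NatScale.
Variables (F : fieldType) (A : lalgType F) (n : nat).
Hypothesis n_neq0 : n%:R != 0 :> F.

Lemma natr_mulK (z : A) : n%:R^-1 *: (n%:R * z) = z.
Proof. by rewrite mulr_natl -scaler_nat scalerA mulVf ?scale1r. Qed.

Lemma natr_mulKV (z : A) : n%:R * (n%:R^-1 *: z) = z.
Proof. by rewrite mulr_natl -scaler_nat scalerA mulfV ?scale1r. Qed.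

End NatScale.

Lemma coef_resid_trunc_succ f m : f 0%N = 0 -> f 1%N = 1 ->
  (resid_poly (fps_trunc m.+4 f))`_m.+1 =
  (resid_poly (fps_trunc m.+2 f))`_m.+1 - (ode_pivot m)%:R * f m.+2.
Proof.
move=> f0 f1; have -> : m.+4 = (m.+2 + 2)%N by rewrite addn2.
rewrite fps_trunc_add.
by rewrite coef_resid_polyXnMD ?horner0_deriv_fps_trunc ?horner0_fps_trunc ?addn0.
Qed.

Lemma ode_pivot_neq0 m : (ode_pivot m)%:R != 0 :> rat.
Proof. by rewrite pnatr_eq0 /ode_pivot -muln2 muln_eq0. Qed.

Definition ode_step (n : nat) (g : fps Rq) : Rq :=
  match n with
  | 0 => 0
  | 1 => 1
  | m.+2 => (ode_pivot m)%:R^-1 *: (resid_poly (fps_trunc m.+2 g))`_m.+1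
  end.

Lemma ode_step_ext n g h :
  (forall i, (i < n)%N -> g i = h i) -> ode_step n g = ode_step n h.
Proof. by case: n => [|[|m]] // H; rewrite /ode_step /fps_trunc (eq_poly _ H). Qed.

Lemma ode_solution_step f :
  normalized f -> ode_for_logderiv f -> forall n, f n = ode_step n f.
Proof.
move=> [f0 f1] /ode_for_logderivP E [|[|m]] //=.
move/eqP: (E m.+1); rewrite coef_resid_trunc_succ // subr_eq0 => /eqP ->.
by rewrite natr_mulK ?ode_pivot_neq0.
Qed.

Definition ode_solution : fps Rq := strong_rec 0 ode_step.

Lemma ode_solutionE n : ode_solution n = ode_step n ode_solution.
Proof. exact: strong_recE _ ode_step_ext n. Qed.

Lemma ode_solution_normalized : normalized ode_solution.
Proof. by split; rewrite ode_solutionE. Qed.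

Lemma ode_solution_ode : ode_for_logderiv ode_solution.
Proof.
have [f0 f1] := ode_solution_normalized.
apply/ode_for_logderivP => -[|m].
  by rewrite resid_poly_coef0 ?horner0_deriv_fps_trunc ?horner0_fps_trunc.
by rewrite coef_resid_trunc_succ // (ode_solutionE m.+2) natr_mulKV ?ode_pivot_neq0 ?subrr.
Qed.

Lemma ode_solution_unique f :
  normalized f -> ode_for_logderiv f -> f = ode_solution.
Proof. by move=> Hn Ho; apply: strong_rec_unique _ ode_step_ext _ (ode_solution_step Hn Ho). Qed.

Lemma ode_solution_wt f :
  normalized f -> ode_for_logderiv f -> forall n, wt_homogz (n%:Z - 1) (f n).
Proof.
move=> Hn Ho; have [f0 f1] := Hn; elim/ltn_ind => -[|[|m]] IH.
- by rewrite f0; exact: wt_homogz0.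
- by rewrite f1; exact: wt_homogz1.
rewrite (ode_solution_step Hn Ho); apply: wt_homogzZ.
have HG : graded (fps_trunc m.+2 f) (-1).
  by move=> i; rewrite coef_poly; case: ifP => [/IH|_]; [|exact: wt_homogz0].
have -> : m.+2%:Z - 1 = m.+1%:Z + 0 by lia.
exact: graded_resid_poly.
Qed.

Section DivideX.
Variables (R : nzRingType) (f : fps R).
Hypotheses (f0 : f 0%N = 0) (f1 : f 1%N = 1).

Definition xdiv_step (k : nat) (g : fps R) : R :=
  fps_X R k.+1 - \sum_(i < k) g i * f (k.+1 - i)%N.

Lemma xdiv_step_ext n g h :
  (forall i, (i < n)%N -> g i = h i) -> xdiv_step n g = xdiv_step n h.
Proof. by move=> H; congr (_ - _); apply: eq_bigr => i _; rewrite H. Qed.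

Lemma fps_mul_coefS (Q : fps R) k :
  fps_mul Q f k.+1 = \sum_(i < k) Q i * f (k.+1 - i)%N + Q k.
Proof. by rewrite /fps_mul !big_ord_recr /= subnn f0 mulr0 addr0 subSnn f1 mulr1. Qed.

Lemma fps_mul_eqXP (Q : fps R) :
  (forall n, fps_mul Q f n = fps_X R n) <-> (forall k, Q k = xdiv_step k Q).
Proof.
split=> H; first by move=> k; rewrite /xdiv_step -(H k.+1) fps_mul_coefS addrC addKr.
case=> [|k]; first by rewrite /fps_mul big_ord_recr big_ord0 /= f0 mulr0 add0r.
by rewrite fps_mul_coefS (H k) /xdiv_step addrC subrK.
Qed.

Definition fps_xdiv : fps R := strong_rec 0 xdiv_step.

Lemma fps_mul_xdiv n : fps_mul fps_xdiv f n = fps_X R n.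
Proof. by move: n; apply/fps_mul_eqXP => k; exact: strong_recE _ xdiv_step_ext k. Qed.

Lemma fps_xdiv_unique Q : (forall n, fps_mul Q f n = fps_X R n) -> Q = fps_xdiv.
Proof. by move/fps_mul_eqXP/(strong_rec_unique (0 : R) xdiv_step_ext). Qed.

End DivideX.

Lemma xdiv_wt (f Q : fps Rq) : (forall n, wt_homogz (n%:Z - 1) (f n)) ->
  (forall k, Q k = xdiv_step f k Q) -> forall n : nat, wt_homogz n (Q n).
Proof.
move=> Hf HQ; elim/ltn_ind => n IH; rewrite HQ; apply: wt_homogzB.
  by case: n {IH} => [|n]; [exact: wt_homogz1|exact: wt_homogz0].
apply: wt_homogz_sum => i _; have Hi := ltn_ord i.
have -> : n%:Z = i%:Z + ((n.+1 - i)%N%:Z - 1) by lia.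
exact: wt_homogzM (IH i Hi) (Hf _).
Qed.

Theorem lemma2p2p1 :
  (exists! f : fps Rq, normalized f /\ ode_for_logderiv f) /\
  (forall f : fps Rq, normalized f -> ode_for_logderiv f ->
     (exists! Q : fps Rq, forall n, fps_mul Q f n = fps_X Rq n) /\
     (forall Q : fps Rq, (forall n, fps_mul Q f n = fps_X Rq n) ->
        Q 0%N = 1 /\ (forall n : nat, wt_homog n (Q n)))).
Proof.
split.
  exists ode_solution; split=> [|g [Hn Ho]].
    exact: conj ode_solution_normalized ode_solution_ode.
  by rewrite (ode_solution_unique Hn Ho).
move=> f Hn Ho; have [f0 f1] := Hn.
split.
  exists (fps_xdiv f); split; first exact: fps_mul_xdiv f0 f1.
  by move=> Q /(fps_xdiv_unique f0 f1) ->.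
move=> Q /(fps_mul_eqXP f0 f1 _) HQ; split.
  by rewrite HQ /xdiv_step big_ord0 subr0.
by move=> n; apply/wt_homogzE/(xdiv_wt (ode_solution_wt Hn Ho) HQ).
Qed.
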